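(* Under the hypotheses of the real single-interference setting in the context (with $N\ge2$, $\|h_0\|=\|h_1\|=1$, $h_0^{\sf T}h_1=\sin\tau$, $\tau\in(-\pi/2,\pi/2)$, $\sigma_0^2,\sigma_1^2,\sigma_n^2>0$, $c_1\in[-\sigma_0\sigma_1,\sigma_0\sigma_1]$), let $\delta:=\sigma_n^2\tan\tau-c_1\cos\tau$. Then \[ \mathrm{MSE}_{\rm MVDR}=\frac{\sigma_n^2(\sigma_1^2+\sigma_n^2)+|c_1|^2\cos^2\tau}{\sigma_1^2\cos^2\tau+\sigma_n^2},\quad \mathrm{MSE}_{\rm ZF}=\sigma_n^2(\tan^2\tau+1), \] \[ \mathrm{MSE}_{\rm MMSE\text{-}DR}=\frac{\sigma_n^2(\sigma_1^2+\sigma_n^2)}{\sigma_1^2\cos^2\tau+\sigma_n^2}=\mathrm{MSE}_{\rm MVDR}-\frac{|c_1|^2\cos^2\tau}{\sigma_1^2\cos^2\tau+\sigma_n^2}=\mathrm{MSE}_{\rm ZF}-\frac{\sigma_n^4\tan^2\tau}{\sigma_1^2\cos^2\tau+\sigma_n^2}. \] If $\delta=0$, then $\mathrm{MSE}(\lambda)=\mathrm{MSE}_{\rm ZF}=\mathrm{MSE}_{\rm MVDR}$ for all $\lambda\ge0$. If $\delta\ne0$, then with $\gamma:=\sigma_n^2\tan\tau/\delta$, \[ \mathrm{MSE}_{\rm RZF}=\begin{cases}\mathrm{MSE}_{\rm ZF}, & \gamma\le0,\\ \mathrm{MSE}_{\rm MMSE\text{-}DR}, & \gamma\in(0,1),\\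 \mathrm{MSE}_{\rm MVDR}, & \gamma\ge1.\end{cases} \]
   Context: Real-valued single-interference model: $y(k)=s_0(k)h_0+s_1(k)h_1+n(k)\in\mathbb{R}^N$, with real zero-mean jointly weakly stationary signals $s_0,s_1$, $\sigma_j^2:=E[s_j(k)^2]$, $c_1:=E[s_0(k)s_1(k)]$, and real zero-mean noise $n(k)\sim\mathcal{N}(0,\sigma_n^2I)$ uncorrelated with the signals. $R:=E[y(k)y(k)^{\sf T}]$. The MSE of $w$ is $J_{\rm MSE}(w):=E[(w^{\sf T}y(k)-s_0(k))^2]$. Beamformers: RZF $w_{\rm RZF}(\lambda):=R_\lambda^{-1}h_0/(h_0^{\sf T}R_\lambda^{-1}h_0)$ with $R_\lambda:=R+\lambda h_1h_1^{\sf T}$, $\lambda\ge0$; MVDR $w_{\rm MVDR}:=w_{\rm RZF}(0)$; ZF $w_{\rm ZF}:=R^{-1}H(H^{\sf T}R^{-1}H)^{-1}e_1$ with $H=[h_0\ h_1]$, $e_1=[1,0]^{\sf T}$; MMSE-DR $w_{\rm MMSE\text{-}DR}:=\widetilde R^{-1}h_0/(h_0^{\sf T}\widetilde R^{-1}h_0)$ with $\widetilde R:=\sigma_n^2I+\sigma_1^2h_1h_1^{\sf T}$. $\mathrm{MSE}(\lambda):=J_{\rm MSE}(w_{\rm RZF}(\lambda))$, $\mathrm{MSE}_{\rm RZF}:=\inf_{\lambda\ge0}\mathrm{MSE}(\lambda)$, and $\mathrm{MSE}_{X}:=J_{\rm MSE}(w_X)$ for $X\in\{\rm MVDR,ZF,MMSE\text{-}DR\}$.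 *)

From HB Require Import structures.
From mathcomp Require Import all_boot all_order all_algebra.
From mathcomp Require Import all_classical all_reals all_analysis.

Set Implicit Arguments.
Unset Strict Implicit.
Unset Printing Implicit Defensive.

Import Order.TTheory GRing.Theory Num.Theory.
Local Open Scope ring_scope.

Section Beamformers.
Variables (R : realType) (N : nat).
(* second-order statistics of the model
   y = s0 h0 + s1 h1 + n :  sig0^2 = E[s0^2], sig1^2 = E[s1^2],
   c1 = E[s0 s1], sign^2 = noise variance *)
Variables (h0 h1 : 'cV[R]_N) (sig0 sig1 sign c1 : R).

Definition dotv (u v : 'cV[R]_N) : R := (u^T *m v) 0 0.

(* R := E[y y^T] *)
Definition Rcov : 'M[R]_N :=
  sig0 ^+ 2 *: (h0 *m h0^T) + sig1 ^+ 2 *: (h1 *m h1^T)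
  + c1 *: (h0 *m h1^T + h1 *m h0^T) + sign ^+ 2 *: 1%:M.

(* E[y s0] *)
Definition rcross : 'cV[R]_N := sig0 ^+ 2 *: h0 + c1 *: h1.

(* J_MSE(w) = E[(w^T y - s0)^2] = w^T R w - 2 w^T E[y s0] + E[s0^2] *)
Definition JMSE (w : 'cV[R]_N) : R :=
  dotv w (Rcov *m w) - 2 * dotv w rcross + sig0 ^+ 2.

Definition w_RZF (lam : R) : 'cV[R]_N :=
  let Rl := invmx (Rcov + lam *: (h1 *m h1^T)) in
  (dotv h0 (Rl *m h0))^-1 *: (Rl *m h0).

Definition w_MVDR : 'cV[R]_N := w_RZF 0.

Definition w_ZF : 'cV[R]_N :=
  let Ri := invmx Rcov in
  let H : 'M[R]_(N, 2) := row_mx h0 h1 in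
  Ri *m H *m invmx (H^T *m Ri *m H) *m (delta_mx 0 0 : 'cV[R]_2).

Definition Rtilde : 'M[R]_N := sign ^+ 2 *: 1%:M + sig1 ^+ 2 *: (h1 *m h1^T).

Definition w_MMSEDR : 'cV[R]_N :=
  let Rt := invmx Rtilde in
  (dotv h0 (Rt *m h0))^-1 *: (Rt *m h0).

Definition MSE (lam : R) : R := JMSE (w_RZF lam).
Definition MSE_RZF : R := inf [set MSE lam | lam in [set l : R | 0 <= l]].
Definition MSE_MVDR : R := JMSE w_MVDR.
Definition MSE_ZF : R := JMSE w_ZF.
Definition MSE_MMSEDR : R := JMSE w_MMSEDR.
End Beamformers.

From HB Require Import structures.
From mathcomp Require Import all_boot all_order all_algebra.
From mathcomp Require Import all_classical all_reals all_analysis.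
From mathcomp Require Import ring lra.
Import Order.TTheory GRing.Theory Num.Theory.
Local Open Scope ring_scope.
Local Open Scope classical_set_scope.

Set Implicit Arguments.
Unset Strict Implicit.
Unset Printing Implicit Defensive.

(* Write s = h0^T h1 = sin tau, K = 1 - s^2 = cos^2 tau, E0 = s1^2 K + sn^2 and
   X = sn^2 s - c K (so that delta = X / cos tau).
   1. Every beamformer of the statement is distortionless (h0^T w = 1) and lies
      in span{h0, h1}, where such a vector is determined by its interference
      gain a = h1^T w; we call it dl a.  A general fact on Capon beamformers
      M^-1 h / (h^T M^-1 h) gives RZF(lam) = dl (X / ((s1^2 + lam) K + sn^2)),
      hence MVDR = RZF(0); likewise ZF = dl 0 and MMSE-DR = dl (sn^2 s / E0).
   2. On distortionless vectors the MSE is s1^2 a^2 + sn^2 |w|^2, which on dl a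
      is the parabola m + (E0 / K) (a - sn^2 s / E0)^2, m being the MMSE-DR
      value.  This yields all closed forms.
   3. The substitution t = E0 / ((s1^2 + lam) K + sn^2) maps [0, +oo[ onto
      ]0, 1] and turns MSE(lam) into m + X^2 / (K E0) (t - gamma)^2 with
      gamma = sn^2 s / X; the infimum of this parabola over ]0, 1] depends only
      on the position of its vertex gamma.
   The file develops inner products, the covariance matrix, the geometry of
   span{h0, h1}, the beamformer formulas and the infimum of a parabola; the
   main theorem only translates tau into s = sin tau. *)

Section InnerProduct.
Variables (R : realType) (N : nat).
Implicit Types (u v w x : 'cV[R]_N).

Lemma dotvE u v : dotv u v = \sum_i u i 0 * v i 0.
Proof. by rewrite /dotv mxE; apply: eq_bigr => i _; rewrite mxE. Qed.

Lemma dotvC u v : dotv u v = dotv v u.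
Proof. by rewrite !dotvE; apply: eq_bigr => i _; rewrite mulrC. Qed.

Lemma dotvDr u v w : dotv u (v + w) = dotv u v + dotv u w.
Proof. by rewrite /dotv mulmxDr mxE. Qed.

Lemma dotvZr u v (a : R) : dotv u (a *: v) = a * dotv u v.
Proof. by rewrite /dotv -scalemxAr mxE. Qed.

Lemma dotv0r u : dotv u 0 = 0.
Proof. by rewrite /dotv mulmx0 mxE. Qed.

Lemma dotvDl u v w : dotv (v + w) u = dotv v u + dotv w u.
Proof. by rewrite dotvC dotvDr !(dotvC u). Qed.

Lemma dotvZl u v (a : R) : dotv (a *: v) u = a * dotv v u.
Proof. by rewrite dotvC dotvZr dotvC. Qed.

Lemma dotv_comb u v w (a b : R) :
  dotv u (a *: v + b *: w) = a * dotv u v + b * dotv u w.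
Proof. by rewrite dotvDr !dotvZr. Qed.

Lemma outer_mul u v x : (u *m v^T) *m x = dotv v x *: u.
Proof. by rewrite -mulmxA [_ *m x]mx11_scalar mul_mx_scalar. Qed.

Lemma dotv_ge0 x : 0 <= dotv x x.
Proof. by rewrite dotvE; apply: sumr_ge0 => i _; rewrite -expr2 sqr_ge0. Qed.

Lemma dotv_eq0 x : dotv x x = 0 -> x = 0.
Proof.
rewrite dotvE => /psumr_eq0P sq0; apply/matrixP => i j; rewrite (ord1 j) mxE.
have : x i 0 * x i 0 = 0 by apply: sq0 => // k _; rewrite -expr2 sqr_ge0.
by move/eqP; rewrite -expr2 sqrf_eq0 => /eqP.
Qed.

Lemma unitmx_definite (M : 'M[R]_N) :
  (forall x, dotv x (M *m x) = 0 -> x = 0) -> M \in unitmx.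
Proof.
move=> defM; rewrite unitmxE unitfE; apply/negP => /det0P [v v0 vM].
have : dotv v^T (M *m v^T) = 0 by rewrite /dotv trmxK mulmxA vM mul0mx mxE.
by move/defM/eqP; rewrite trmx_eq0; apply/negP.
Qed.

Definition capon (M : 'M[R]_N) (h : 'cV[R]_N) : 'cV[R]_N :=
  let Mi := invmx M in (dotv h (Mi *m h))^-1 *: (Mi *m h).

Lemma capon_parallel (M : 'M[R]_N) h u (k : R) :
  M \in unitmx -> M *m u = k *: h -> dotv h u = 1 -> capon M h = u.
Proof.
move=> uM Mu hu.
have uE : u = k *: (invmx M *m h) by rewrite scalemxAr -Mu mulKmx.
have k0 : k != 0.
  by apply/eqP => k0; move: hu; rewrite uE dotvZr k0 mul0r => /eqP; rewrite eq_sym oner_eq0.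
rewrite uE dotvZr in hu; rewrite [RHS]uE /capon /=; congr (_ *: _).
by rewrite -[RHS]invrK; congr _^-1; apply: (mulfI k0); rewrite hu mulfV.
Qed.

End InnerProduct.

(* An admissible correlation |c| <= s0 s1 makes the 2x2 signal covariance
   [[s0^2, c], [c, s1^2]] positive semidefinite. *)
Lemma signal_form_ge0 (R : realFieldType) (s0 s1 c p q : R) :
  - (s0 * s1) <= c -> c <= s0 * s1 ->
  0 <= s0 ^+ 2 * p ^+ 2 + s1 ^+ 2 * q ^+ 2 + 2 * c * p * q.
Proof.
move=> hcl hcu; have [pq|pq] := lerP 0 (p * q).
  have : 0 <= (c + s0 * s1) * (p * q) by apply: mulr_ge0; lra.
  have := sqr_ge0 (s0 * p - s1 * q). nra.
have : 0 <= (s0 * s1 - c) * - (p * q) by apply: mulr_ge0; lra.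
have := sqr_ge0 (s0 * p + s1 * q). nra.
Qed.

Section Covariance.
Variables (R : realType) (N : nat) (h0 h1 : 'cV[R]_N) (s0 s1 sn c : R).
Local Notation Rc := (Rcov h0 h1 s0 s1 sn c).

Definition Rreg (lam : R) : 'M[R]_N := Rc + lam *: (h1 *m h1^T).

Lemma Rcov_mul x :
  Rc *m x = (s0 ^+ 2 * dotv h0 x + c * dotv h1 x) *: h0
            + (s1 ^+ 2 * dotv h1 x + c * dotv h0 x) *: h1 + sn ^+ 2 *: x.
Proof.
rewrite /Rcov !mulmxDl -!scalemxAl !mulmxDl !outer_mul mul1mx.
by apply/matrixP => i j; rewrite !mxE; ring.
Qed.

Lemma Rreg_mul lam x :
  Rreg lam *m x = (s0 ^+ 2 * dotv h0 x + c * dotv h1 x) *: h0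
            + ((s1 ^+ 2 + lam) * dotv h1 x + c * dotv h0 x) *: h1 + sn ^+ 2 *: x.
Proof.
rewrite /Rreg mulmxDl Rcov_mul -scalemxAl outer_mul.
by apply/matrixP => i j; rewrite !mxE; ring.
Qed.

Lemma Rcov_sym x y : dotv (Rc *m x) y = dotv x (Rc *m y).
Proof. by rewrite !Rcov_mul !dotvDl !dotvDr !dotvZl !dotvZr (dotvC x h0) (dotvC x h1); ring. Qed.

Hypotheses (hsn : 0 < sn) (hcl : - (s0 * s1) <= c) (hcu : c <= s0 * s1).

(* R_lam is positive definite, with quadratic form at least sn^2 |x|^2. *)
Lemma Rreg_definite lam x : 0 <= lam -> dotv x (Rreg lam *m x) = 0 -> x = 0.
Proof.
move=> hl; rewrite Rreg_mul !dotvDr !dotvZr (dotvC x h0) (dotvC x h1) => form0.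
apply: dotv_eq0; apply/eqP; rewrite eq_le dotv_ge0 andbT leNgt; apply/negP => xpos.
have := signal_form_ge0 (dotv h0 x) (dotv h1 x) hcl hcu.
have : 0 < sn ^+ 2 * dotv x x by rewrite mulr_gt0 ?exprn_gt0.
have : 0 <= lam * dotv h1 x ^+ 2 by rewrite mulr_ge0 ?sqr_ge0.
nra.
Qed.

Lemma Rreg_unit lam : 0 <= lam -> Rreg lam \in unitmx.
Proof. by move=> hl; apply: unitmx_definite => x; apply: Rreg_definite. Qed.

Lemma Rcov_unit : Rc \in unitmx.
Proof. by have := Rreg_unit (lexx 0); rewrite /Rreg scale0r addr0. Qed.

Lemma invRcov_definite y : dotv y (invmx Rc *m y) = 0 -> y = 0.
Proof.
set z := invmx Rc *m y => yz0.
have Rz : Rc *m z = y by rewrite mulKVmx ?Rcov_unit.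
have : z = 0.
  apply: (@Rreg_definite 0) => //; rewrite /Rreg scale0r addr0.
  by rewrite -Rcov_sym Rz.
by rewrite -Rz => ->; rewrite mulmx0.
Qed.

Lemma Rcov_span w x y :
  Rc *m w = x *: h0 + y *: h1 -> exists a b, w = a *: h0 + b *: h1.
Proof.
rewrite Rcov_mul => Rw.
have sn0 : sn != 0 by rewrite gt_eqF.
have sn2 : sn ^+ 2 != 0 by rewrite expf_eq0.
set a := _ + c * dotv h1 w in Rw; set b := _ + c * dotv h0 w in Rw.
exists ((x - a) / sn ^+ 2), ((y - b) / sn ^+ 2).
apply/matrixP => i j; have := congr1 (fun M : 'M[R]_(N, 1) => M i j) Rw.
rewrite !mxE => Eij; apply: (mulfI sn2).
by transitivity ((x - a) * h0 i j + (y - b) * h1 i j); [lra | field].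
Qed.

Lemma JMSE_distortionless w : dotv h0 w = 1 ->
  JMSE h0 h1 s0 s1 sn c w = s1 ^+ 2 * dotv h1 w ^+ 2 + sn ^+ 2 * dotv w w.
Proof.
move=> hw; rewrite /JMSE /rcross Rcov_mul !dotvDr !dotvZr.
by rewrite (dotvC w h0) (dotvC w h1) hw; ring.
Qed.

End Covariance.

Lemma inf_attained (R : realType) (S : set R) (m : R) :
  (forall x, S x -> m <= x) -> S m -> inf S = m.
Proof.
move=> lb Sm; apply/eqP; rewrite eq_le lb_le_inf ?andbT //; last by exists m.
by apply: ge_inf => //; exists m => y /lb.
Qed.

Lemma inf_approx (R : realType) (S : set R) (m : R) :
  (forall x, S x -> m <= x) -> (exists x, S x) ->
  (forall e, 0 < e -> exists2 x, S x & x < m + e) -> inf S = m.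
Proof.
move=> lb S0 approx; apply/eqP; rewrite eq_le lb_le_inf ?andbT //.
rewrite leNgt; apply/negP => mS.
have : 0 < inf S - m by rewrite subr_gt0.
move=> /approx [x Sx]; rewrite addrC subrK.
by apply/negP; rewrite -leNgt; apply: ge_inf => //; exists m => y /lb.
Qed.

Section QuadraticInfimum.
Variables (R : realType) (m B g : R).
Hypothesis B_ge0 : 0 <= B.
Local Notation unit_itv := [set t : R | 0 < t <= 1].
Local Notation parabola := ((fun t : R => m + B * (t - g) ^+ 2) @` unit_itv).

Lemma inf_parabola_left : g <= 0 -> inf parabola = m + B * g ^+ 2.
Proof.
move=> g0; apply: inf_approx.
- move=> _ [t /andP [t0 t1] <-]; rewrite lerD2l ler_wpM2l //; nra.
- by exists (m + B * (1 - g) ^+ 2), 1 => //=; rewrite ltr01 lexx.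
move=> e e0; set C := B * (1 - 2 * g).
have C0 : 0 <= C by rewrite mulr_ge0 //; lra.
pose t := e / (e + C); have eC : 0 < e + C by lra.
have t0 : 0 < t by rewrite divr_gt0.
have t1 : t <= 1 by rewrite ler_pdivrMr // mul1r; lra.
exists (m + B * (t - g) ^+ 2); first by exists t => //=; rewrite t0 t1.
have Ct : C * t < e by rewrite /t mulrA ltr_pdivrMr //; nra.
have t_le1 : 0 <= 1 - t by rewrite subr_ge0.
have := mulr_ge0 (mulr_ge0 B_ge0 (ltW t0)) t_le1.
rewrite /C in Ct; nra.
Qed.

Lemma inf_parabola_mid : 0 < g < 1 -> inf parabola = m.
Proof.
move=> /andP [g0 g1]; apply: inf_attained.
- by move=> _ [t _ <-]; rewrite lerDl mulr_ge0 ?sqr_ge0.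
by exists g; [rewrite /= g0 ltW | rewrite subrr expr0n mulr0 addr0].
Qed.

Lemma inf_parabola_right : 1 <= g -> inf parabola = m + B * (1 - g) ^+ 2.
Proof.
move=> g1; apply: inf_attained.
- move=> _ [t /andP [t0 t1] <-]; rewrite lerD2l ler_wpM2l //; nra.
by exists 1 => //=; rewrite ltr01 lexx.
Qed.

End QuadraticInfimum.

Section Geometry.
Variables (R : realType) (N : nat) (h0 h1 : 'cV[R]_N) (s : R).
Hypotheses (h00 : dotv h0 h0 = 1) (h11 : dotv h1 h1 = 1) (h01 : dotv h0 h1 = s).
Hypothesis hs : s ^+ 2 < 1.
Local Notation K := (1 - s ^+ 2).

(* K = 1 - s^2 is the determinant of the Gram matrix of h0, h1. *)
Lemma K_gt0 : 0 < K.
Proof. by rewrite subr_gt0. Qed.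

Let K_neq0 : K != 0. Proof. exact: lt0r_neq0 K_gt0. Qed.

(* The denominators (s1^2 + lam) K + sn^2 of the RZF family are positive. *)
Lemma den_gt0 a sn : 0 <= a -> 0 < sn -> 0 < a * K + sn ^+ 2.
Proof.
move=> a0 sn0; have := exprn_gt0 2 sn0.
have : 0 <= a * K by rewrite mulr_ge0 // ltW ?K_gt0.
lra.
Qed.

Lemma dotv_h0_comb x y : dotv h0 (x *: h0 + y *: h1) = x + y * s.
Proof. by rewrite dotv_comb h00 h01 mulr1. Qed.

Lemma dotv_h1_comb x y : dotv h1 (x *: h0 + y *: h1) = x * s + y.
Proof. by rewrite dotv_comb h11 dotvC h01 mulr1. Qed.

(* Since the Gram matrix [[1, s], [s, 1]] is invertible, h0 and h1 are
   linearly independent. *)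
Lemma comb_indep x y : x *: h0 + y *: h1 = 0 -> x = 0 /\ y = 0.
Proof.
move=> xy0; have := dotv_h1_comb x y; have := dotv_h0_comb x y.
rewrite xy0 !dotv0r => e0 e1.
have : x * K = 0 by transitivity ((x + y * s) - (x * s + y) * s); [ring | rewrite -e0 -e1; ring].
by move/eqP; rewrite mulf_eq0 (negbTE K_neq0) orbF => /eqP x0; split; nra.
Qed.

(* dl a is the distortionless vector of span{h0, h1} (h0^T w = 1) with
   residual interference gain h1^T w = a. *)
Definition dl (a : R) : 'cV[R]_N := ((1 - a * s) / K) *: h0 + ((a - s) / K) *: h1.

Lemma dl_h0 a : dotv h0 (dl a) = 1.
Proof. by rewrite dotv_h0_comb; field. Qed.

Lemma dl_h1 a : dotv h1 (dl a) = a.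
Proof. by rewrite dotv_h1_comb; field. Qed.

Lemma dl_norm a : dotv (dl a) (dl a) = (1 - 2 * s * a + a ^+ 2) / K.
Proof.
by rewrite [X in dotv X _]/dl dotvDl !dotvZl dl_h0 dl_h1; field.
Qed.

Lemma comb_dl x y a :
  dotv h0 (x *: h0 + y *: h1) = 1 -> dotv h1 (x *: h0 + y *: h1) = a ->
  x *: h0 + y *: h1 = dl a.
Proof.
rewrite dotv_h0_comb dotv_h1_comb => e0 e1.
have xK : x * K = 1 - a * s.
  by transitivity ((x + y * s) - (x * s + y) * s); [ring | rewrite e0 e1].
have xE : x = (1 - a * s) / K by rewrite -xK mulfK.
have yE : y = (a - s) / K by rewrite (_ : y = a - x * s); [rewrite xE; field | lra].
by rewrite /dl xE yE.
Qed.

Lemma row_mx_mul (u : 'cV[R]_(1 + 1)) :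
  row_mx h0 h1 *m u = u (lshift 1 0) 0 *: h0 + u (rshift 1 0) 0 *: h1.
Proof.
by rewrite -{1}[u]vsubmxK mul_row_col [usubmx u]mx11_scalar [dsubmx u]mx11_scalar
  !mul_mx_scalar !mxE.
Qed.

Lemma row_mx_inj (u : 'cV[R]_(1 + 1)) : row_mx h0 h1 *m u = 0 -> u = 0.
Proof.
rewrite row_mx_mul => /comb_indep [u0 u1].
apply/matrixP => i j; rewrite (ord1 j) mxE -(splitK i).
by case: (fintype.split i) => k; rewrite (ord1 k) /= ?u0 ?u1.
Qed.

Section Beamformers.
Variables (s0 s1 sn c : R).
Hypotheses (hsn : 0 < sn) (hcl : - (s0 * s1) <= c) (hcu : c <= s0 * s1).
Local Notation Rc := (Rcov h0 h1 s0 s1 sn c).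

Lemma w_RZF_dl lam : 0 <= lam ->
  w_RZF h0 h1 s0 s1 sn c lam
  = dl ((sn ^+ 2 * s - c * K) / ((s1 ^+ 2 + lam) * K + sn ^+ 2)).
Proof.
move=> hl; set a := _ / _.
have E_gt0 := den_gt0 (addr_ge0 (sqr_ge0 s1) hl) hsn.
have cancel_h1 : (s1 ^+ 2 + lam) * a + c + sn ^+ 2 * ((a - s) / K) = 0.
  by rewrite /a; field; rewrite K_neq0 gt_eqF.
pose k := s0 ^+ 2 + c * a + sn ^+ 2 * ((1 - a * s) / K).
apply: (@capon_parallel _ _ _ _ _ k (Rreg_unit h0 h1 hsn hcl hcu hl) _ (dl_h0 a)).
rewrite Rreg_mul dl_h0 dl_h1 [X in sn ^+ 2 *: X]/dl.
apply/matrixP => i j; rewrite !mxE -[RHS]addr0 -(mulr0 (h1 i j)) -cancel_h1 /k.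
ring.
Qed.

(* The ZF beamformer solves H^T w = e1 with w in R^-1 span{h0, h1}. *)
Lemma w_ZF_dl : w_ZF h0 h1 s0 s1 sn c = dl 0.
Proof.
rewrite /w_ZF /=; set H := row_mx h0 h1; set Q := H^T *m invmx Rc *m H.
have Q_unit : Q \in unitmx.
  apply: unitmx_definite => u Qu0; apply: row_mx_inj.
  apply: (@invRcov_definite _ _ h0 h1 s0 s1 sn c hsn hcl hcu).
  by move: Qu0; rewrite /dotv /Q trmx_mul !mulmxA.
set w := _ *m delta_mx 0 0.
have Hw : H^T *m w = delta_mx 0 0 by rewrite /w !mulmxA -/Q mulmxV ?mul1mx.
have h0w : dotv h0 w = 1.
  have := congr1 (fun M : 'M[R]_(1 + 1, 1) => M (lshift 1 0) 0) Hw.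
  by rewrite /= /H tr_row_mx mul_col_mx col_mxEu -/(dotv h0 w) => ->; rewrite mxE.
have h1w : dotv h1 w = 0.
  have := congr1 (fun M : 'M[R]_(1 + 1, 1) => M (rshift 1 0) 0) Hw.
  by rewrite /= /H tr_row_mx mul_col_mx col_mxEd -/(dotv h1 w) => ->; rewrite mxE.
have Rw : Rc *m w = H *m (invmx Q *m delta_mx 0 0).
  by rewrite /w -!mulmxA mulKVmx // (Rcov_unit h0 h1 hsn hcl hcu).
have [x [y wE]] := Rcov_span hsn (etrans Rw (row_mx_mul _)).
by rewrite wE; apply: comb_dl; rewrite -wE.
Qed.

End Beamformers.

(* MMSE-DR is the MVDR beamformer of the model with s0 = c = 0, hence an
   RZF beamformer as well. *)
Lemma w_MMSEDR_dl s1 sn : 0 < sn ->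
  w_MMSEDR h0 h1 s1 sn = dl (sn ^+ 2 * s / (s1 ^+ 2 * K + sn ^+ 2)).
Proof.
move=> hsn; have hcl : - (0 * s1) <= 0 by rewrite mul0r oppr0.
have hcu : 0 <= 0 * s1 by rewrite mul0r.
have -> : w_MMSEDR h0 h1 s1 sn = w_RZF h0 h1 0 s1 sn 0 0.
  by rewrite /w_MMSEDR /w_RZF /Rtilde /Rcov expr0n /= !scale0r !addr0 add0r addrC.
by rewrite w_RZF_dl // mul0r subr0 addr0.
Qed.

Lemma JMSE_dl s0 s1 sn c a : 0 < sn ->
  JMSE h0 h1 s0 s1 sn c (dl a)
  = sn ^+ 2 * (s1 ^+ 2 + sn ^+ 2) / (s1 ^+ 2 * K + sn ^+ 2)
    + (s1 ^+ 2 * K + sn ^+ 2) / K * (a - sn ^+ 2 * s / (s1 ^+ 2 * K + sn ^+ 2)) ^+ 2.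
Proof.
move=> hsn; have E0_gt0 := den_gt0 (sqr_ge0 s1) hsn.
rewrite JMSE_distortionless ?dl_h0 // dl_h1 dl_norm.
by field; rewrite gt_eqF.
Qed.

Section Optimum.
Variables (s0 s1 sn c : R).
Hypotheses (hsn : 0 < sn) (hcl : - (s0 * s1) <= c) (hcu : c <= s0 * s1).
Local Notation E0 := (s1 ^+ 2 * K + sn ^+ 2).
Local Notation X := (sn ^+ 2 * s - c * K).
Local Notation mse_min := (sn ^+ 2 * (s1 ^+ 2 + sn ^+ 2) / E0).
Local Notation a_opt := (sn ^+ 2 * s / E0).

Let E0_gt0 : 0 < E0. Proof. exact: den_gt0 (sqr_ge0 s1) hsn. Qed.

Lemma MSE_lam lam : 0 <= lam ->
  MSE h0 h1 s0 s1 sn c lam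
  = mse_min + E0 / K * (X / ((s1 ^+ 2 + lam) * K + sn ^+ 2) - a_opt) ^+ 2.
Proof. by move=> hl; rewrite /MSE w_RZF_dl // JMSE_dl. Qed.

(* MVDR is RZF at lam = 0, ZF has interference gain 0. *)
Lemma MSE_MVDR_gain :
  MSE_MVDR h0 h1 s0 s1 sn c = mse_min + E0 / K * (X / E0 - a_opt) ^+ 2.
Proof. by rewrite /MSE_MVDR /w_MVDR w_RZF_dl // JMSE_dl // addr0. Qed.

Lemma MSE_ZF_gain : MSE_ZF h0 h1 s0 s1 sn c = mse_min + E0 / K * (0 - a_opt) ^+ 2.
Proof. by rewrite /MSE_ZF w_ZF_dl // JMSE_dl. Qed.

Lemma MSE_closed_forms :
  [/\ MSE_MMSEDR h0 h1 s0 s1 sn c = mse_min,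
      MSE_MVDR h0 h1 s0 s1 sn c = mse_min + c ^+ 2 * K / E0 &
      MSE_ZF h0 h1 s0 s1 sn c = mse_min + sn ^+ 4 * s ^+ 2 / (K * E0)].
Proof.
have E0_neq0 := lt0r_neq0 E0_gt0.
split.
- by rewrite /MSE_MMSEDR w_MMSEDR_dl // JMSE_dl // subrr expr0n mulr0 addr0.
- by rewrite MSE_MVDR_gain; congr (_ + _); field; rewrite ?K_neq0 ?E0_neq0.
- by rewrite MSE_ZF_gain; congr (_ + _); field; rewrite ?K_neq0 ?E0_neq0.
Qed.

(* When X = 0 the interference gain of every RZF beamformer vanishes. *)
Lemma MSE_degenerate : X = 0 -> forall lam, 0 <= lam ->
  MSE h0 h1 s0 s1 sn c lam = MSE_ZF h0 h1 s0 s1 sn c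
  /\ MSE_ZF h0 h1 s0 s1 sn c = MSE_MVDR h0 h1 s0 s1 sn c.
Proof. by move=> X0 lam hl; rewrite MSE_lam // MSE_ZF_gain MSE_MVDR_gain X0 !mul0r. Qed.

(* Otherwise, t = E0 / ((s1^2 + lam) K + sn^2) sweeps ]0, 1] as lam sweeps
   [0, +oo[, and the MSE is a parabola in t with vertex sn^2 s / X. *)
Lemma MSE_image : X != 0 ->
  [set MSE h0 h1 s0 s1 sn c lam | lam in [set l : R | 0 <= l]]
  = (fun t => mse_min + X ^+ 2 / (K * E0) * (t - sn ^+ 2 * s / X) ^+ 2)
      @` [set t : R | 0 < t <= 1].
Proof.
move=> X0; have E0_neq0 := lt0r_neq0 E0_gt0.
apply/seteqP; split => _ [x hx <-].
- have E_gt0 := den_gt0 (addr_ge0 (sqr_ge0 s1) hx) hsn.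
  exists (E0 / ((s1 ^+ 2 + x) * K + sn ^+ 2)).
    rewrite /= divr_gt0 ?E0_gt0 // ler_pdivrMr // mul1r.
    by have := mulr_ge0 hx (ltW K_gt0); lra.
  by rewrite MSE_lam //; congr (_ + _); field; rewrite ?K_neq0 ?E0_neq0 ?X0 ?(gt_eqF E_gt0).
- move: hx => /= /andP [x0 x1].
  have lam0 : 0 <= E0 * (1 - x) / (x * K).
    have x_le1 : 0 <= 1 - x by rewrite subr_ge0.
    exact: divr_ge0 (mulr_ge0 (ltW E0_gt0) x_le1) (mulr_ge0 (ltW x0) (ltW K_gt0)).
  exists (E0 * (1 - x) / (x * K)) => //.
  have x_neq0 := lt0r_neq0 x0.
  have Ex : (s1 ^+ 2 + E0 * (1 - x) / (x * K)) * K + sn ^+ 2 = E0 / x.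
    by field; rewrite ?K_neq0 ?x_neq0.
  by rewrite MSE_lam // Ex; congr (_ + _); field; rewrite ?K_neq0 ?E0_neq0 ?X0 ?x_neq0.
Qed.

Lemma MSE_RZF_cases : X != 0 ->
  let g := sn ^+ 2 * s / X in
  [/\ g <= 0 -> MSE_RZF h0 h1 s0 s1 sn c = MSE_ZF h0 h1 s0 s1 sn c,
      0 < g < 1 -> MSE_RZF h0 h1 s0 s1 sn c = MSE_MMSEDR h0 h1 s0 s1 sn c &
      1 <= g -> MSE_RZF h0 h1 s0 s1 sn c = MSE_MVDR h0 h1 s0 s1 sn c].
Proof.
move=> X0 g; have [-> -> ->] := MSE_closed_forms.
have E0_neq0 := lt0r_neq0 E0_gt0.
have B_ge0 : 0 <= X ^+ 2 / (K * E0).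
  by rewrite divr_ge0 ?sqr_ge0 // mulr_ge0 ?ltW ?K_gt0.
rewrite /MSE_RZF MSE_image //; split => hg.
- by rewrite inf_parabola_left //; congr (_ + _); field; rewrite ?K_neq0 ?E0_neq0 ?X0.
- by rewrite inf_parabola_mid.
- by rewrite inf_parabola_right //; congr (_ + _); field; rewrite ?K_neq0 ?E0_neq0 ?X0.
Qed.

End Optimum.

End Geometry.

(* The main theorem: the statements above with s = sin tau, K = cos^2 tau,
   E0 = den and X = delta cos tau. *)
Theorem theorem2 (R : realType) (N : nat) (h0 h1 : 'cV[R]_N)
    (tau sig0 sig1 sign c1 : R) :
  (2 <= N)%N ->
  dotv h0 h0 = 1 -> dotv h1 h1 = 1 -> dotv h0 h1 = sin tau ->
  - (pi / 2) < tau -> tau < pi / 2 ->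
  0 < sig0 -> 0 < sig1 -> 0 < sign ->
  - (sig0 * sig1) <= c1 -> c1 <= sig0 * sig1 ->
  let MSE_MVDR := MSE_MVDR h0 h1 sig0 sig1 sign c1 in
  let MSE_ZF := MSE_ZF h0 h1 sig0 sig1 sign c1 in
  let MSE_MMSEDR := MSE_MMSEDR h0 h1 sig0 sig1 sign c1 in
  let MSE_RZF := MSE_RZF h0 h1 sig0 sig1 sign c1 in
  let MSE := MSE h0 h1 sig0 sig1 sign c1 in
  let den := sig1 ^+ 2 * cos tau ^+ 2 + sign ^+ 2 in
  let delta := sign ^+ 2 * tan tau - c1 * cos tau in
  [/\ MSE_MVDR = (sign ^+ 2 * (sig1 ^+ 2 + sign ^+ 2)
                  + `|c1| ^+ 2 * cos tau ^+ 2) / den,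
      MSE_ZF = sign ^+ 2 * (tan tau ^+ 2 + 1),
      [/\ MSE_MMSEDR = sign ^+ 2 * (sig1 ^+ 2 + sign ^+ 2) / den,
          MSE_MMSEDR = MSE_MVDR - `|c1| ^+ 2 * cos tau ^+ 2 / den &
          MSE_MMSEDR = MSE_ZF - sign ^+ 4 * tan tau ^+ 2 / den],
      (delta = 0 ->
         forall lam, 0 <= lam -> MSE lam = MSE_ZF /\ MSE_ZF = MSE_MVDR) &
      (delta != 0 ->
         let gamma := sign ^+ 2 * tan tau / delta in
         [/\ gamma <= 0 -> MSE_RZF = MSE_ZF,
             0 < gamma < 1 -> MSE_RZF = MSE_MMSEDR &
             1 <= gamma -> MSE_RZF = MSE_MVDR])].
Proof.
move=> _ h00 h11 h01 tau_gt tau_lt _ _ hsn hcl hcu MVDR ZF MMSEDR RZF MSEf den delta.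
have cos_gt0 : 0 < cos tau by apply: cos_gt0_pihalf; rewrite tau_gt tau_lt.
have cos_neq0 := lt0r_neq0 cos_gt0.
have cos2 : cos tau ^+ 2 = 1 - sin tau ^+ 2 := cos2sin2 tau.
have hs : sin tau ^+ 2 < 1 by rewrite -subr_gt0 -cos2 exprn_gt0.
have K_neq0 : 1 - sin tau ^+ 2 != 0 by rewrite -cos2 expf_neq0.
have denE : den = sig1 ^+ 2 * (1 - sin tau ^+ 2) + sign ^+ 2 by rewrite /den cos2.
have E0_neq0 := lt0r_neq0 (den_gt0 hs (sqr_ge0 sig1) hsn).
have [vMMSEDR vMVDR vZF] := MSE_closed_forms h00 h11 h01 hs hsn hcl hcu.
have tanE : tan tau = sin tau / cos tau by [].
have c1E : `|c1| ^+ 2 = c1 ^+ 2 by rewrite real_normK ?num_real.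
set X := sign ^+ 2 * sin tau - c1 * (1 - sin tau ^+ 2).
have deltaE : delta = X / cos tau by rewrite /delta /X tanE -cos2; field.
split.
- by rewrite /MVDR vMVDR c1E denE cos2 mulrDl.
- by rewrite /ZF vZF tanE expr_div_n cos2; field; rewrite K_neq0 E0_neq0.
- split.
  + by rewrite /MMSEDR vMMSEDR denE.
  + by rewrite /MMSEDR /MVDR vMMSEDR vMVDR c1E denE cos2 addrK.
  + by rewrite /MMSEDR /ZF vMMSEDR vZF denE tanE expr_div_n cos2; field; rewrite K_neq0 E0_neq0.
- move=> /eqP; rewrite deltaE mulf_eq0 invr_eq0 (negbTE cos_neq0) orbF => /eqP X0.
  exact: (MSE_degenerate h00 h11 h01 hs hsn hcl hcu X0).
move=> delta_neq0 gamma.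
have X_neq0 : X != 0 by apply: contraNneq delta_neq0 => X0; rewrite deltaE X0 mul0r.
have -> : gamma = sign ^+ 2 * sin tau / X.
  by rewrite /gamma deltaE tanE; field; rewrite X_neq0 cos_neq0.
exact: (MSE_RZF_cases h00 h11 h01 hs hsn hcl hcu X_neq0).
Qed.
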